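(* Let $\mathcal{U}=\{u_\rho:\mathcal{X}\to\mathbb{R}\mid \rho\in\mathbb{R}\}$ be a real-valued function class such that for every $x\in\mathcal{X}$ the dual function $u^*_x(\rho):=u_\rho(x)$ is piecewise continuous with at most $B_1$ discontinuities and at most $B_2$ local maxima (with $B_1+B_2\ge 2$). Then $\mathrm{Pdim}(\mathcal{U})=O(\log(B_1+B_2))$.
   Context: Piecewise continuous with at most $B_1$ discontinuities: continuous outside a set of at most $B_1$ points. Local maximum: a point $\rho_0$ with an open neighborhood on which the function is $\le$ its value at $\rho_0$. Pseudo-dimension: a set $\{x_1,\dots,x_m\}\subset\mathcal{X}$ is pseudo-shattered by $\mathcal{U}$ if there exist thresholds $r_1,\dots,r_m\in\mathbb{R}$ such that $|\{(\mathrm{sign}(u(x_1)-r_1),\dots,\mathrm{sign}(u(x_m)-r_m)) : u\in\mathcal{U}\}|=2^m$; $\mathrm{Pdim}(\mathcal{U})$ is the largest size of a pseudo-shattered set. *)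

From Stdlib Require Import Reals List.
Open Scope R_scope.

Definition piecewise_continuous_at_most (f : R -> R) (B1 : nat) : Prop :=
  exists D : list R, (length D <= B1)%nat /\
    forall t, ~ In t D -> continuity_pt f t.

Definition local_max (f : R -> R) (t0 : R) : Prop :=
  exists eps, 0 < eps /\ forall t, Rabs (t - t0) < eps -> f t <= f t0.

Definition at_most_local_maxima (f : R -> R) (B2 : nat) : Prop :=
  forall L : list R, NoDup L -> (forall t, In t L -> local_max f t) ->
    (length L <= B2)%nat.

Definition pseudo_shattered {X : Type} (u : R -> X -> R) (m : nat)
    (x : nat -> X) : Prop :=
  (forall i j, (i < m)%nat -> (j < m)%nat -> x i = x j -> i = j) /\
  exists r : nat -> R,
    forall b : nat -> bool, exists rho : R,
      forall i, (i < m)%nat -> (r i <= u rho (x i) <-> b i = true).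

(* Fix the thresholds r_i witnessing that x_1, ..., x_m are pseudo-shattered and
   sort 2^m parameters realising all sign patterns.  Adjacent parameters differ
   in at least one coordinate, so 2^m - 1 is at most the total number of sign
   changes of the m indicator functions rho |-> [u*_(x_i)(rho) >= r_i] along the
   sorted list.  Each indicator changes sign O(B1 + B2) times: between a point
   below the threshold, one above it and a later one below it, the dual function
   is either discontinuous or attains a local maximum, and bumps taken over
   disjoint intervals yield distinct such points.  Hence
   2^m <= 1 + m (4 (B1 + B2) + 3), i.e. m = O(log (B1 + B2)). *)
From Stdlib Require Import Reals List Lra Lia Orders Permutation Sorted Mergesort
  Classical IndefiniteDescription.
Import ListNotations.
Open Scope R_scope.

Definition differs (a b : bool) : nat := if Bool.eqb a b then 0 else 1.

Fixpoint sign_changes (l : list bool) : nat :=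
  match l with
  | a :: (b :: _) as l' => differs a b + sign_changes l'
  | _ => 0
  end.

Fixpoint up_crossings (l : list bool) : nat :=
  match l with
  | a :: (b :: _) as l' => (if negb a && b then 1 else 0) + up_crossings l'
  | _ => 0
  end.

Lemma sign_changes_cons2 a b l :
  sign_changes (a :: b :: l) = (differs a b + sign_changes (b :: l))%nat.
Proof. reflexivity. Qed.

Lemma up_crossings_cons2 a b l :
  up_crossings (a :: b :: l) = ((if negb a && b then 1 else 0) + up_crossings (b :: l))%nat.
Proof. reflexivity. Qed.

Lemma sign_changes_le_up_crossings (l : list bool) :
  (sign_changes l <= 2 * up_crossings l + 1)%nat.
Proof.
  enough (H : forall l, (sign_changes l <= 2 * up_crossings l + if hd false l then 1 else 0)%nat)
    by (specialize (H l); destruct (hd false l); lia).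
  clear l; intros l; induction l as [|a [|b l] IH]; [simpl; lia | destruct a; simpl; lia |].
  rewrite sign_changes_cons2, up_crossings_cons2.
  destruct a, b; unfold differs; simpl in *; lia.
Qed.

Definition above (f : R -> R) (r t : R) : bool :=
  if Rle_dec r (f t) then true else false.

Lemma above_true_iff f r t : above f r t = true <-> r <= f t.
Proof. unfold above; destruct (Rle_dec r (f t)); split; easy. Qed.

Lemma above_false_iff f r t : above f r t = false <-> f t < r.
Proof. unfold above; destruct (Rle_dec r (f t)); split; intros; lra || easy. Qed.

Lemma above_eq_of_iff f r t (b : bool) : (r <= f t <-> b = true) -> above f r t = b.
Proof.
  intros Hb; destruct b.
  - now apply above_true_iff, Hb.
  - apply above_false_iff, Rnot_le_lt; intros Hle; now apply Hb in Hle.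
Qed.

Section DualFunction.

Variables (f : R -> R) (D : list R) (r : R).
Hypothesis f_continuous : forall t, ~ In t D -> continuity_pt f t.

Definition witness (w : R) : Prop := local_max f w \/ In w D.

(* Extreme value theorem on [a, b] unless [a, b] meets D; the maximum is interior
   because it beats both endpoints. *)
Lemma witness_between a c b :
  a < c -> c < b -> f a < f c -> f b < f c -> exists w, a <= w <= b /\ witness w.
Proof.
  intros Hac Hcb Ha Hb.
  destruct (classic (exists d, In d D /\ a <= d <= b))
    as [[d [HdD Hd]] | HnoD].
  { exists d; split; [exact Hd | now right]. }
  destruct (continuity_ab_maj f a b) as [w [Hmax Hw]]; [lra | |].
  { intros t Ht; apply f_continuous; intros HtD; apply HnoD; now exists t. }
  assert (f c <= f w) by (apply Hmax; lra).
  assert (a < w) by (destruct (Req_dec a w); subst; lra).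
  assert (w < b) by (destruct (Req_dec w b); subst; lra).
  exists w; split; [lra | left].
  exists (Rmin (w - a) (b - w)); split; [now apply Rmin_glb_lt; lra |].
  intros t Ht; apply Hmax; apply Rabs_def2 in Ht.
  pose proof (Rmin_l (w - a) (b - w)); pose proof (Rmin_r (w - a) (b - w)); lra.
Qed.

Definition crossings_witnessed (t0 : R) (T : list R) : Prop :=
  exists W, NoDup W /\ (forall w, In w W -> t0 <= w /\ witness w) /\
    (up_crossings (map (above f r) (t0 :: T)) <= 2 * length W + 1)%nat.

Lemma crossings_witnessed_tail t0 t1 T :
  t0 < t1 -> (above f r t0 = true \/ above f r t1 = false) ->
  crossings_witnessed t1 T -> crossings_witnessed t0 (t1 :: T).
Proof.
  intros H01 Hno_up [W [HW [Hwit Hcount]]]; exists W; split; [exact HW | split].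
  - intros w Hw; destruct (Hwit w Hw); split; [lra | assumption].
  - cbn [map] in Hcount |- *; rewrite up_crossings_cons2.
    destruct (above f r t0), (above f r t1), Hno_up; try discriminate; cbn [negb andb]; lia.
Qed.

(* An up-crossing at [a -> c] is closed by the first later point [c'] below r;
   the bump (a, c, c') yields a witness, and the recursion resumes strictly after [c']
   so that the intervals of distinct bumps are disjoint. *)
Lemma crossings_witnessed_after_low (n : nat) :
  (forall t0 T, (length T <= n)%nat -> StronglySorted Rlt (t0 :: T) ->
     crossings_witnessed t0 T) ->
  forall L a c, (length L <= n)%nat -> StronglySorted Rlt (a :: c :: L) ->
    above f r a = false -> above f r c = true -> crossings_witnessed a (c :: L).
Proof.
  intros IH L; induction L as [|c' L IHL]; intros a c Hlen Hsorted Ha Hc.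
  { exists []; split; [constructor | split; [easy |]].
    cbn [map]; rewrite up_crossings_cons2, Ha, Hc; simpl; lia. }
  apply StronglySorted_inv in Hsorted as [Hsorted Ha_lt].
  apply StronglySorted_inv in Hsorted as [Hsorted Hc_lt].
  rewrite Forall_forall in Ha_lt, Hc_lt.
  destruct (above f r c') eqn:Hc'.
  - destruct (IHL a c') as [W [HW [Hwit Hcount]]]; [simpl in Hlen; lia | | exact Ha | exact Hc' |].
    + constructor; [exact Hsorted | rewrite Forall_forall; intros; apply Ha_lt; now right].
    + exists W; split; [exact HW | split; [exact Hwit |]].
      cbn [map] in *; rewrite !up_crossings_cons2 in *; rewrite Ha, Hc, Hc' in *.
      cbn [negb andb] in *; lia.
  - assert (Hac : a < c) by (apply Ha_lt; now left).
    assert (Hcc' : c < c') by (apply Hc_lt; now left).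
    apply above_false_iff in Ha as Ha_below; apply above_true_iff in Hc as Hc_above.
    apply above_false_iff in Hc' as Hc'_below.
    destruct (witness_between a c c') as [w [Hw Hwit_w]]; [exact Hac | exact Hcc' | lra | lra |].
    destruct L as [|d L].
    { exists []; split; [constructor | split; [easy |]].
      cbn [map]; rewrite !up_crossings_cons2, Ha, Hc, Hc'; simpl; lia. }
    apply StronglySorted_inv in Hsorted as [Hsorted Hc'_lt]; rewrite Forall_forall in Hc'_lt.
    assert (Hc'd : c' < d) by (apply Hc'_lt; now left).
    destruct (IH d L) as [W [HW [Hwit Hcount]]];
      [simpl in Hlen; lia | exact Hsorted |].
    exists (w :: W); split; [| split].
    + constructor; [intros Hin; apply Hwit in Hin; lra | exact HW].
    + intros w' [<- | Hin]; [split; [lra | exact Hwit_w] |].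
      destruct (Hwit w' Hin); split; [lra | assumption].
    + cbn [map length] in *; rewrite !up_crossings_cons2 in *; rewrite Ha, Hc, Hc' in *.
      destruct (above f r d); cbn [negb andb] in *; lia.
Qed.

Lemma crossings_witnessed_sorted t0 T :
  StronglySorted Rlt (t0 :: T) -> crossings_witnessed t0 T.
Proof.
  remember (length T) as n eqn:Hn; assert (Hlen : (length T <= n)%nat) by lia; clear Hn.
  revert t0 T Hlen; induction n as [|n IH]; intros t0 [|t1 T] Hlen Hsorted;
    try (exists []; split; [constructor | split; [easy | simpl; lia]]).
  { simpl in Hlen; lia. }
  simpl in Hlen.
  assert (H01 : t0 < t1).
  { apply StronglySorted_inv in Hsorted as [_ Hlt]; now inversion Hlt. }
  assert (Htail : crossings_witnessed t1 T).
  { apply IH; [lia | now apply StronglySorted_inv in Hsorted as []]. }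
  destruct (above f r t0) eqn:H0, (above f r t1) eqn:H1;
    try (apply crossings_witnessed_tail; auto; fail).
  now apply (crossings_witnessed_after_low n IH); [lia | ..].
Qed.

End DualFunction.

Lemma witnesses_length_le f D B1 B2 W :
  (length D <= B1)%nat -> at_most_local_maxima f B2 -> NoDup W ->
  (forall w, In w W -> witness f D w) -> (length W <= B1 + B2)%nat.
Proof.
  intros HD Hmax HW Hwit.
  set (inD := fun w => if in_dec Req_EM_T w D then true else false).
  rewrite <- (filter_length inD W).
  assert (length (filter inD W) <= length D)%nat.
  { apply NoDup_incl_length; [now apply NoDup_filter |].
    intros w Hw; apply filter_In in Hw as [_ Hw]; unfold inD in Hw.
    now destruct (in_dec Req_EM_T w D). }
  assert (length (filter (fun w => negb (inD w)) W) <= B2)%nat.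
  { apply Hmax; [now apply NoDup_filter |].
    intros w Hw; apply filter_In in Hw as [Hin Hw]; unfold inD in Hw.
    destruct (Hwit w Hin); [assumption |].
    now destruct (in_dec Req_EM_T w D). }
  lia.
Qed.

Lemma sign_changes_above_le f r B1 B2 T :
  piecewise_continuous_at_most f B1 -> at_most_local_maxima f B2 ->
  StronglySorted Rlt T -> (sign_changes (map (above f r) T) <= 4 * (B1 + B2) + 3)%nat.
Proof.
  intros [D [HD Hcont]] Hmax Hsorted.
  destruct T as [|t0 T]; [simpl; lia |].
  destruct (crossings_witnessed_sorted f D r Hcont t0 T Hsorted) as [W [HW [Hwit Hcount]]].
  assert (length W <= B1 + B2)%nat
    by (apply (witnesses_length_le f D); auto; intros w Hw; apply Hwit, Hw).
  pose proof (sign_changes_le_up_crossings (map (above f r) (t0 :: T))); lia.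
Qed.

Lemma list_sum_map_add {A : Type} (g h : A -> nat) (l : list A) :
  (list_sum (map (fun x => g x + h x) l) = list_sum (map g l) + list_sum (map h l))%nat.
Proof. induction l as [|a l IH]; simpl; lia. Qed.

Lemma list_sum_map_ge {A : Type} (g : A -> nat) (l : list A) x :
  In x l -> (g x <= list_sum (map g l))%nat.
Proof.
  induction l as [|a l IH]; intros Hin; [destruct Hin |].
  destruct Hin as [<- | Hin]; simpl; [| specialize (IH Hin)]; lia.
Qed.

Lemma list_sum_map_le {A : Type} (g : A -> nat) (l : list A) K :
  (forall x, In x l -> (g x <= K)%nat) -> (list_sum (map g l) <= length l * K)%nat.
Proof.
  induction l as [|a l IH]; intros Hg; simpl; [lia |].
  specialize (IH (fun x Hx => Hg x (or_intror Hx))); specialize (Hg a (or_introl eq_refl)).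
  lia.
Qed.

Lemma length_le_total_sign_changes (G : nat -> R -> bool) (m : nat) (T : list R) :
  Sorted Rlt T ->
  (forall a b, In a T -> In b T -> a <> b -> exists i, (i < m)%nat /\ G i a <> G i b) ->
  (length T <= 1 + list_sum (map (fun i => sign_changes (map (G i) T)) (seq 0 m)))%nat.
Proof.
  induction T as [|a [|b T] IH]; intros Hsorted Hsep; simpl; try lia.
  assert (Hab : a < b) by (inversion Hsorted as [|? ? _ Hhd]; now inversion Hhd).
  apply Sorted_inv in Hsorted as [Hsorted _].
  specialize (IH Hsorted (fun x y Hx Hy => Hsep x y (or_intror Hx) (or_intror Hy))).
  change (S (length (b :: T)) <= 1 + list_sum (map (fun i =>
    differs (G i a) (G i b) + sign_changes (map (G i) (b :: T))) (seq 0 m)))%nat.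
  rewrite list_sum_map_add.
  destruct (Hsep a b (or_introl eq_refl) (or_intror (or_introl eq_refl))) as [i [Hi Hdiff]];
    [lra |].
  pose proof (list_sum_map_ge (fun i => differs (G i a) (G i b)) (seq 0 m) i) as Hge.
  rewrite in_seq in Hge; specialize (Hge (conj (Nat.le_0_l i) Hi)).
  unfold differs in Hge at 1; destruct (G i a), (G i b); try easy; simpl in Hge; lia.
Qed.

Lemma testbit_separated m k k' :
  (k < 2 ^ m)%nat -> (k' < 2 ^ m)%nat -> k <> k' ->
  exists i, (i < m)%nat /\ Nat.testbit k i <> Nat.testbit k' i.
Proof.
  intros Hk Hk' Hneq; apply NNPP; intros Hagree; apply Hneq.
  apply Nat.bits_inj; intros i.
  destruct (Nat.lt_ge_cases i m) as [Hi | Hi].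
  - apply NNPP; intros Hdiff; apply Hagree; now exists i.
  - rewrite <- (Nat.mod_small k (2 ^ m)), <- (Nat.mod_small k' (2 ^ m)) by assumption.
    now rewrite !Nat.mod_pow2_bits_high.
Qed.

Module RLeBool <: TotalLeBool.
  Definition t := R.
  Definition leb (x y : R) : bool := if Rle_dec x y then true else false.
  Theorem leb_total : forall x y, leb x y = true \/ leb y x = true.
  Proof. intros x y; unfold leb; destruct (Rle_dec x y), (Rle_dec y x); auto; lra. Qed.
End RLeBool.

Module RSort := Sort RLeBool.

Lemma sort_StronglySorted_Rlt (l : list R) : NoDup l -> StronglySorted Rlt (RSort.sort l).
Proof.
  intros Hnodup; apply (Permutation_NoDup (RSort.Permuted_sort l)) in Hnodup.
  assert (Hsorted : StronglySorted (fun x y => RLeBool.leb x y = true) (RSort.sort l)).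
  { apply RSort.StronglySorted_sort; intros x y z; unfold RLeBool.leb.
    destruct (Rle_dec x y), (Rle_dec y z), (Rle_dec x z); easy || lra. }
  induction Hsorted as [|a l' _ IH Hle]; constructor.
  - now apply IH; inversion Hnodup.
  - inversion Hnodup as [|? ? Hnotin _]; subst.
    rewrite Forall_forall in Hle |- *; intros y Hy; specialize (Hle y Hy).
    unfold RLeBool.leb in Hle; destruct (Rle_dec a y); [| easy].
    destruct (Req_dec a y); [subst; contradiction | lra].
Qed.

(* The 2^m parameters are indexed by k < 2^m through the binary digits of k. *)
Lemma sorted_separated_points (G : nat -> R -> bool) (m : nat) :
  (forall b : nat -> bool, exists rho, forall i, (i < m)%nat -> G i rho = b i) ->
  exists T, length T = (2 ^ m)%nat /\ StronglySorted Rlt T /\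
    (forall a b, In a T -> In b T -> a <> b -> exists i, (i < m)%nat /\ G i a <> G i b).
Proof.
  intros Hreal.
  destruct (functional_choice (fun k rho => forall i, (i < m)%nat -> G i rho = Nat.testbit k i)
              (fun k => Hreal (Nat.testbit k))) as [pick Hpick].
  set (P := map pick (seq 0 (2 ^ m))).
  assert (Hsep : forall a b, In a P -> In b P -> a <> b ->
                   exists i, (i < m)%nat /\ G i a <> G i b).
  { intros a b Ha Hb Hab; apply in_map_iff in Ha as [k [<- Hk]], Hb as [k' [<- Hk']].
    rewrite in_seq in Hk, Hk'.
    destruct (testbit_separated m k k') as [i [Hi Hdiff]]; try lia.
    { intros ->; contradiction. }
    exists i; split; [exact Hi |]; now rewrite !Hpick. }
  assert (Hnodup : NoDup P).
  { apply NoDup_map_NoDup_ForallPairs; [| apply seq_NoDup].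
    intros k k' Hk Hk' Heq; rewrite in_seq in Hk, Hk'.
    destruct (Nat.eq_dec k k') as [| Hneq]; [assumption | exfalso].
    destruct (testbit_separated m k k') as [i [Hi Hdiff]]; try lia.
    apply Hdiff; now rewrite <- !Hpick, Heq. }
  assert (Hperm := RSort.Permuted_sort P).
  exists (RSort.sort P); split; [| split].
  - rewrite <- (Permutation_length Hperm); unfold P; now rewrite length_map, length_seq.
  - now apply sort_StronglySorted_Rlt.
  - intros a b Ha Hb; apply Hsep; now apply (Permutation_in _ (Permutation_sym Hperm)).
Qed.

Lemma pow2_le_of_linear_bound m S :
  (2 <= S)%nat -> (2 ^ m <= 1 + m * (4 * S + 3))%nat -> (2 ^ m <= S ^ 11)%nat.
Proof.
  intros HS Hlin.
  set (q := (m / 2)%nat); set (e := (m mod 2)%nat).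
  assert (Hm : m = (2 * q + e)%nat) by apply Nat.div_mod_eq.
  assert (He : (e < 2)%nat) by (apply Nat.mod_upper_bound; lia).
  assert (Hq : (q < 2 ^ q)%nat) by (apply Nat.pow_gt_lin_r; lia).
  assert (H2m : (2 ^ m = 2 ^ q * 2 ^ q * 2 ^ e)%nat)
    by (rewrite Hm, <- !Nat.pow_add_r; f_equal; lia).
  assert (He1 : (1 <= 2 ^ e <= 2)%nat) by (destruct e as [|[|]]; simpl; lia).
  assert (Hpow : (2 ^ q <= 8 * S + 6)%nat) by nia.
  assert (HS4 : (16 <= S ^ 4)%nat) by (apply (Nat.pow_le_mono_l 2 S 4) in HS; simpl in *; lia).
  assert (HS5 : (2 ^ q <= S ^ 5)%nat) by (change (S ^ 5)%nat with (S * S ^ 4)%nat; nia).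
  replace (S ^ 11)%nat with (S ^ 5 * S ^ 5 * S ^ 1)%nat
    by (rewrite <- !Nat.pow_add_r; reflexivity).
  rewrite H2m, Nat.pow_1_r; apply Nat.mul_le_mono; [apply Nat.mul_le_mono |]; lia.
Qed.

Lemma INR_le_ln_of_pow2_le m S :
  (2 <= S)%nat -> (2 ^ m <= S ^ 11)%nat -> INR m <= 22 * ln (INR S).
Proof.
  intros HS Hpow.
  assert (Hln : ln (INR (2 ^ m)) <= ln (INR (S ^ 11))).
  { apply le_INR in Hpow.
    destruct (Rle_lt_or_eq_dec _ _ Hpow) as [Hlt | ->]; [| lra].
    left; apply ln_increasing; [apply lt_0_INR, Nat.neq_0_lt_0, Nat.pow_nonzero |]; easy. }
  rewrite !pow_INR, !ln_pow in Hln by (apply lt_0_INR; lia).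
  replace (INR 11) with 11 in Hln by (simpl; lra).
  replace (INR 2) with 2 in Hln by reflexivity.
  pose proof ln_lt_2; pose proof (pos_INR m); nra.
Qed.

Theorem mainTheorem2 :
  exists C : R, 0 < C /\
    forall (X : Type) (u : R -> X -> R) (B1 B2 : nat),
      (2 <= B1 + B2)%nat ->
      (forall x : X, piecewise_continuous_at_most (fun rho => u rho x) B1 /\
                     at_most_local_maxima (fun rho => u rho x) B2) ->
      forall (m : nat) (x : nat -> X),
        pseudo_shattered u m x -> INR m <= C * ln (INR (B1 + B2)).
Proof.
  exists 22; split; [lra |].
  intros X u B1 B2 HB Hdual m x [_ [r Hr]].
  set (G := fun i => above (fun rho => u rho (x i)) (r i)).
  destruct (sorted_separated_points G m) as [T [HT [Hsorted Hsep]]].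
  { intros b; destruct (Hr b) as [rho Hrho]; exists rho; intros i Hi.
    now apply above_eq_of_iff, Hrho. }
  apply INR_le_ln_of_pow2_le, pow2_le_of_linear_bound; [exact HB | exact HB |].
  rewrite <- HT.
  eapply Nat.le_trans; [apply length_le_total_sign_changes;
                        [now apply StronglySorted_Sorted | exact Hsep] |].
  rewrite <- (length_seq m 0) at 2.
  apply Nat.add_le_mono_l, list_sum_map_le; intros i _.
  destruct (Hdual (x i)); now apply sign_changes_above_le.
Qed.
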